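(* Let $\eta\colon K[x]\to\Gamma'\cup\{\infty\}$ be a valuation extending $v$, with respect to some order-preserving embedding $\iota\colon\Gamma\hookrightarrow\Gamma'$ of ordered abelian groups, and embed $\Gamma_{\mathbb Q}\hookrightarrow\Gamma'_{\mathbb Q}$ via $\iota\otimes\mathbb Q$. Then the following are equivalent: (1) $\eta(f)\le\mu(f)$ for all $f\in K[x]$ and all $\mu\in\mathbb V$; (2) $\eta(x)<\gamma$ for all $\gamma\in\Gamma_{\mathbb Q}$; (3) $\eta$ is equivalent to $\mu_{-\infty}$.
   Context: Let $(K,v)$ be a valued field with non-trivial value group $\Gamma=v(K^* )$, and let $\Gamma_{\mathbb Q}=\Gamma\otimes\mathbb Q$ with its induced order (similarly $\Gamma'_{\mathbb Q}=\Gamma'\otimes\mathbb Q$). Let $\mathbb V$ be the set of valuations $\mu\colon K[x]\to\Gamma_{\mathbb Q}\cup\{\infty\}$ whose restriction to $K$ is $v$. The valuation $\mu_{-\infty}\colon K[x]\to(\mathbb Z\times\Gamma)_{\mathrm{lex}}\cup\{\infty\}$ is $f\mapsto(-\deg f,\,v(\mathrm{lc}(f)))$, where $\mathrm{lc}(f)$ is the leading coefficient and $(\mathbb Z\times\Gamma)_{\mathrm{lex}}$ has the lexicographic order. Two valuations $\eta,\eta'$ on $K[x]$ are equivalent if there is an order-preserving group isomorphism $j$ between their value groups with $\eta=j\circ\eta'$ on $K[x]\setminus\{0\}$. *)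

From mathcomp Require Import all_boot all_order all_algebra.
Set Implicit Arguments. Unset Strict Implicit. Unset Printing Implicit Defensive.
Import Order.TTheory GRing.Theory Num.Theory.
Local Open Scope ring_scope.

Definition is_oag (G : zmodType) (le : rel G) : Prop :=
  [/\ reflexive le, transitive le, antisymmetric le, total le &
      forall x y z : G, le x y -> le (x + z) (y + z)].

Definition ltof (T : eqType) (le : rel T) (x y : T) : bool := le x y && (x != y).

(* G ∪ {∞} is modelled by [option G], with [None] = ∞. *)
Definition ole (G : Type) (le : rel G) (a b : option G) : bool :=
  match a, b with
  | _, None => true
  | None, Some _ => false
  | Some x, Some y => le x y
  end.

Definition oadd (G : zmodType) (a b : option G) : option G :=
  match a, b with
  | Some x, Some y => Some (x + y)
  | _, _ => None
  end.

Definition omin (G : Type) (le : rel G) (a b : option G) : option G :=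
  if ole le a b then a else b.

Definition is_valuation (R : nzRingType) (G : zmodType) (le : rel G)
    (w : R -> option G) : Prop :=
  [/\ forall a, w a = None <-> a = 0,
      w 1 = Some 0,
      forall a b, w (a * b) = oadd (w a) (w b) &
      forall a b, ole le (omin le (w a) (w b)) (w (a + b))].

(* (H, leH, j) is the divisible hull G ⊗ Q of the ordered abelian group
   (G, leG), with its induced order, j : G -> G ⊗ Q being g |-> g ⊗ 1. *)
Definition divisible_hull (G H : zmodType) (leG : rel G) (leH : rel H)
    (j : G -> H) : Prop :=
  [/\ is_oag leH,
      forall x y, j (x + y) = j x + j y,
      forall x y, leH (j x) (j y) = leG x y,
      forall (h : H) (n : nat), (0 < n)%N -> exists h' : H, h' *+ n = h &
      forall h : H, exists n : nat, (0 < n)%N /\ exists g : G, j g = h *+ n].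

(* The value group of a valuation w on R: the subgroup of G generated by
   w(R \ {0}), i.e. the set of differences w a - w b with a, b nonzero. *)
Definition value_group (R : nzRingType) (G : zmodType) (w : R -> option G)
    (g : G) : Prop :=
  exists a b : R, exists x y : G,
    [/\ a != 0, b != 0, w a = Some x, w b = Some y & g = x - y].

Definition equiv_val (R : nzRingType) (G1 G2 : zmodType)
    (le1 : rel G1) (w1 : R -> option G1)
    (le2 : rel G2) (w2 : R -> option G2) : Prop :=
  exists J : G2 -> G1,
    [/\ forall x y, value_group w2 x -> value_group w2 y -> J (x + y) = J x + J y,
        forall x y, value_group w2 x -> value_group w2 y -> le1 (J x) (J y) = le2 x y,
        forall x, value_group w2 x -> value_group w1 (J x),
        forall y, value_group w1 y -> exists2 x, value_group w2 x & J x = y &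
        forall f, f != 0 -> w1 f = omap J (w2 f)].

Definition lexle (G : zmodType) (le : rel G) (a b : int * G) : bool :=
  (a.1 < b.1) || ((a.1 == b.1) && le a.2 b.2).

Definition mu_minf (K : fieldType) (G : zmodType) (v : K -> option G)
    (f : {poly K}) : option (int * G) :=
  omap (fun g => (- ((size f).-1)%:Z, g)) (v (lead_coef f)).

From mathcomp Require Import all_boot all_order all_algebra.
Set Implicit Arguments. Unset Strict Implicit. Unset Printing Implicit Defensive.
Import Order.TTheory GRing.Theory Num.Theory.
Local Open Scope ring_scope.

(* Everything turns on the position of e = eta(x): condition (2) says that
   n e < iota(h) for all h in Gamma and n > 0, i.e. e lies below the divisible hull of
   Gamma.  Then the leading monomial of every nonzero f strictly dominates the others, so
   eta(f) = iota(v(lc f)) + deg f * e; this is mu_{-oo}(f) transported along the order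
   embedding (k, h) |-> iota(h) - k e of (Z x Gamma)_lex, which gives (3), and it also
   gives eta(f) <= eta(f_i x^i) <= mu(f_i x^i) for every i and every mu in V, hence (1)
   by the ultrametric inequality for mu.  Conversely, testing (1) against the Gauss
   valuations f |-> min_i (v(f_i) + i g), with g in Gamma arbitrarily small (Gamma is
   non-trivial), pushes e below the hull; and under (3) the monomial x^n and a constant c
   compare as (-n, 0) < (0, v c), i.e. n e < iota(v c). *)

Section OrderedGroup.
Variables (G : zmodType) (le : rel G).
Hypothesis hG : is_oag le.
Local Notation lt := (ltof le).

Lemma oag_refl : reflexive le. Proof. by case: hG. Qed.

Lemma oag_trans y x z : le x y -> le y z -> le x z.
Proof. by case: hG => _ trans _ _ _; apply: trans. Qed.

Lemma oag_anti x y : le x y -> le y x -> x = y.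
Proof. by case: hG => _ _ anti _ _ lexy leyx; apply: anti; rewrite lexy leyx. Qed.

Lemma oag_total : total le. Proof. by case: hG. Qed.

Lemma oag_leD2r z x y : le (x + z) (y + z) = le x y.
Proof.
case: hG => _ _ _ _ leD; apply/idP/idP => [|/leD //].
by move/(leD _ _ (- z)); rewrite !addrK.
Qed.

Lemma oag_leD2l z x y : le (z + x) (z + y) = le x y.
Proof. by rewrite ![z + _]addrC oag_leD2r. Qed.

Lemma oag_leD x y z t : le x y -> le z t -> le (x + z) (y + t).
Proof.
by move=> lexy lezt; apply: (oag_trans (y := y + z)); rewrite ?oag_leD2r ?oag_leD2l.
Qed.

Lemma oag_ltNge x y : lt x y = ~~ le y x.
Proof.
rewrite /ltof; have [->|nxy] := eqVneq x y; first by rewrite oag_refl.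
rewrite andbT; apply/idP/idP => [lexy|]; last first.
  by have := oag_total x y; case: (le y x) => //; rewrite orbF.
by apply: contra nxy => leyx; rewrite (oag_anti lexy leyx).
Qed.

Lemma oag_ltW x y : lt x y -> le x y. Proof. by case/andP. Qed.

Lemma oag_le_lt_trans y x z : le x y -> lt y z -> lt x z.
Proof.
rewrite !oag_ltNge => lexy; apply: contra => lezx; exact: oag_trans lezx lexy.
Qed.

Lemma oag_lt_le_trans y x z : lt x y -> le y z -> lt x z.
Proof.
rewrite !oag_ltNge => ltxy leyz; apply: contra ltxy => lezx; exact: oag_trans leyz lezx.
Qed.

Lemma oag_ltD2r z x y : lt (x + z) (y + z) = lt x y.
Proof. by rewrite !oag_ltNge oag_leD2r. Qed.

Lemma oag_ltD2l z x y : lt (z + x) (z + y) = lt x y.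
Proof. by rewrite !oag_ltNge oag_leD2l. Qed.

Lemma oag_ltD x y z t : lt x y -> le z t -> lt (x + z) (y + t).
Proof.
move=> ltxy lezt; apply: (oag_lt_le_trans (y := y + z)); rewrite ?oag_ltD2r ?oag_leD2l //.
Qed.

Lemma oag_subr_ge0 x y : le 0 (y - x) = le x y.
Proof. by rewrite -(oag_leD2r x) subrK add0r. Qed.

Lemma oag_subr_gt0 x y : lt 0 (y - x) = lt x y.
Proof. by rewrite -(oag_ltD2r x) subrK add0r. Qed.

Lemma oag_leN2 x y : le (- x) (- y) = le y x.
Proof. by rewrite -oag_subr_ge0 opprK addrC oag_subr_ge0. Qed.

Lemma oag_leMn n x y : le x y -> le (x *+ n) (y *+ n).
Proof.
move=> lexy; elim: n => [|n IHn]; first by rewrite !mulr0n oag_refl.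
by rewrite !mulrS oag_leD.
Qed.

Lemma oag_ltMn n x y : (0 < n)%N -> lt x y -> lt (x *+ n) (y *+ n).
Proof.
case: n => // n _ ltxy; elim: n => [|n IHn]; first by rewrite !mulr1n.
by rewrite mulrS [y *+ _]mulrS oag_ltD // oag_ltW.
Qed.

Lemma oag_leMn2r n x y : (0 < n)%N -> le (x *+ n) (y *+ n) = le x y.
Proof.
move=> n_gt0; apply/idP/idP; last exact: oag_leMn.
by apply: contraLR; rewrite -!oag_ltNge; apply: oag_ltMn.
Qed.

Lemma oag_ltMn2r n x y : (0 < n)%N -> lt (x *+ n) (y *+ n) = lt x y.
Proof. by move=> n_gt0; rewrite !oag_ltNge oag_leMn2r. Qed.

Lemma oag_MnI n (x y : G) : (0 < n)%N -> x *+ n = y *+ n -> x = y.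
Proof.
by move=> n_gt0 eq_xy; apply: oag_anti; rewrite -(oag_leMn2r _ _ n_gt0) eq_xy oag_refl.
Qed.

Lemma oag_exists_ltMn : (exists g : G, g != 0) ->
  forall h n, (0 < n)%N -> exists g, lt (g *+ n) h.
Proof.
case=> g0 g0_neq0 h n n_gt0.
have [d d_gt0] : exists d, lt 0 d.
  case/orP: (oag_total 0 g0) => [le0g0|leg00]; first by exists g0; rewrite /ltof le0g0 eq_sym.
  by exists (- g0); rewrite oag_ltNge -oag_leN2 opprK oppr0 -oag_ltNge /ltof leg00.
have ltNd0 : lt (- (d *+ n)) 0.
  by rewrite oag_ltNge -oag_leN2 !opprK oppr0 -oag_ltNge -(mul0rn _ n) oag_ltMn.
case/orP: (oag_total 0 h) => [le0h|leh0].
  by exists (- d); rewrite mulNrn; apply: oag_lt_le_trans le0h.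
exists (h - d); rewrite mulrnBl addrC -[X in lt _ X]add0r.
apply: oag_ltD ltNd0 _.
case: n n_gt0 => // n _; rewrite mulrSr -[X in le _ X]add0r oag_leD2r.
by rewrite -(mul0rn _ n) oag_leMn.
Qed.

End OrderedGroup.

Section OptionOrder.
Variables (G : zmodType) (le : rel G).
Hypothesis hG : is_oag le.
Local Notation ole := (ole le).
Local Notation olt := (ltof ole).
Implicit Types a b c d : option G.

Lemma ole_refl : reflexive ole.
Proof. by case=> //= x; apply: oag_refl. Qed.

Lemma ole_trans b a c : ole a b -> ole b c -> ole a c.
Proof. by case: a b c => [x|] [y|] [z|] //=; apply: oag_trans. Qed.

Lemma ole_anti a b : ole a b -> ole b a -> a = b.
Proof. by case: a b => [x|] [y|] //= lexy leyx; rewrite (oag_anti hG lexy leyx). Qed.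

Lemma ole_total : total ole.
Proof. by case=> [x|] [y|] //=; apply: oag_total. Qed.

Lemma oltNge a b : olt a b = ~~ ole b a.
Proof.
rewrite /ltof; have [->|nab] := eqVneq a b; first by rewrite ole_refl.
rewrite andbT; apply/idP/idP => [leab|]; last first.
  by have := ole_total a b; case: (ole b a) => //; rewrite orbF.
by apply: contra nab => leba; rewrite (ole_anti leab leba).
Qed.

Lemma oltSS x y : olt (Some x) (Some y) = ltof le x y. Proof. by []. Qed.

Lemma olt_ole a b : olt a b -> ole a b. Proof. by case/andP. Qed.

Lemma omin_cases a b : omin le a b = a \/ omin le a b = b.
Proof. by rewrite /omin; case: ifP; [left | right]. Qed.

Lemma ole_minl a b : ole (omin le a b) a.
Proof.
rewrite /omin; case: ifP => [_|nleab]; first exact: ole_refl.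
by have := ole_total a b; rewrite nleab.
Qed.

Lemma ole_minr a b : ole (omin le a b) b.
Proof. by rewrite /omin; case: ifP => // _; apply: ole_refl. Qed.

Lemma ole_min c a b : ole c a -> ole c b -> ole c (omin le a b).
Proof. by rewrite /omin; case: ifP. Qed.

Lemma ole_oadd a b c d : ole a b -> ole c d -> ole (oadd a c) (oadd b d).
Proof. by case: a b c d => [x|] [y|] [z|] [t|] //=; apply: oag_leD. Qed.

Lemma olt_oadd x y a b : olt (Some x) a -> ole (Some y) b ->
  olt (Some (x + y)) (oadd a b).
Proof. by case: a b => [z|] [t|] //; rewrite !oltNge /= -!oag_ltNge //; apply: oag_ltD. Qed.

Lemma oaddC a b : oadd a b = oadd b a.
Proof. by case: a b => [x|] [y|] //=; rewrite addrC. Qed.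

Lemma ole_addr t a b :
  ole (omap (fun x => x + t) a) (omap (fun x => x + t) b) = ole a b.
Proof. by case: a b => [x|] [y|] //=; rewrite oag_leD2r. Qed.

Lemma ole_shift t c a :
  ole c (omap (fun x => x + t) a) = ole (omap (fun x => x - t) c) a.
Proof. by case: c a => [x|] [y|] //=; rewrite -(oag_leD2r hG (- t)) addrK. Qed.

Lemma olt_addr t a b :
  olt (omap (fun x => x + t) a) (omap (fun x => x + t) b) = olt a b.
Proof. by rewrite !oltNge ole_addr. Qed.

End OptionOrder.

Section Valuation.
Variables (G : zmodType) (le : rel G) (R : nzRingType) (w : R -> option G).
Hypotheses (hG : is_oag le) (hw : is_valuation le w).
Local Notation ole := (ole le).
Local Notation olt := (ltof ole).

Lemma valuation0 : w 0 = None. Proof. by case: hw => w_eqNone _ _ _; apply/w_eqNone. Qed.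

Lemma valuation_neq0 a : a != 0 -> exists x, w a = Some x.
Proof.
case: hw => w_eqNone _ _ _; case wa: (w a) => [x|]; first by exists x.
by move/w_eqNone: wa => ->; rewrite eqxx.
Qed.

Lemma valuation1 : w 1 = Some 0. Proof. by case: hw. Qed.

Lemma valuationM a b : w (a * b) = oadd (w a) (w b). Proof. by case: hw. Qed.

Lemma valuationD a b : ole (omin le (w a) (w b)) (w (a + b)). Proof. by case: hw. Qed.

Lemma valuationXn a x n : w a = Some x -> w (a ^+ n) = Some (x *+ n).
Proof.
move=> wa; elim: n => [|n IHn]; first by rewrite expr0 valuation1 mulr0n.
by rewrite exprS valuationM wa IHn /= mulrS.
Qed.

Lemma valuationN1 : w (-1) = Some 0.
Proof.
have [x wN1] : exists x, w (-1) = Some x.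
  by apply: valuation_neq0; rewrite oppr_eq0 oner_neq0.
rewrite wN1; congr Some; apply: (@oag_MnI _ _ hG 2) => //.
rewrite mulr2n mul0rn; have := valuationM (-1) (-1).
by rewrite mulrNN mulr1 valuation1 wN1 => -[->].
Qed.

Lemma valuationN a : w (- a) = w a.
Proof. by rewrite -mulN1r valuationM valuationN1; case: (w a) => //= x; rewrite add0r. Qed.

Lemma valuationD_ge c a b : ole c (w a) -> ole c (w b) -> ole c (w (a + b)).
Proof. by move=> lea leb; apply: (ole_trans hG (ole_min lea leb) (valuationD a b)). Qed.

Lemma valuationD_gt c a b : olt c (w a) -> olt c (w b) -> olt c (w (a + b)).
Proof.
rewrite !(oltNge hG) => ltca ltcb; apply/negP => leabc.
have := ole_trans hG (valuationD a b) leabc.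
by case: (omin_cases le (w a) (w b)) => ->; apply/negP.
Qed.

Lemma valuation_sum_ge c (I : Type) (r : seq I) (P : pred I) (F : I -> R) :
  (forall i, P i -> ole c (w (F i))) -> ole c (w (\sum_(i <- r | P i) F i)).
Proof.
move=> leF; apply: (big_ind (fun a => ole c (w a))) => //; last exact: valuationD_ge.
by rewrite valuation0; case: c {leF}.
Qed.

Lemma valuation_sum_gt x (I : Type) (r : seq I) (P : pred I) (F : I -> R) :
  (forall i, P i -> olt (Some x) (w (F i))) ->
  olt (Some x) (w (\sum_(i <- r | P i) F i)).
Proof.
move=> ltF; apply: (big_ind (fun a => olt (Some x) (w a))) => //; last exact: valuationD_gt.
by rewrite valuation0.
Qed.

Lemma valuationD_dominant x a b : w a = Some x -> olt (Some x) (w b) -> w (a + b) = Some x.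
Proof.
move=> wa ltxb; apply: (ole_anti hG); last first.
  by apply: valuationD_ge; [rewrite wa ole_refl | apply: olt_ole].
apply: contraT; rewrite -(oltNge hG) => ltxab.
have ltxNb : olt (Some x) (w (- b)) by rewrite valuationN.
by have := valuationD_gt ltxab ltxNb; rewrite addrK wa /ltof eqxx andbF.
Qed.

End Valuation.

Section AdditiveMorphism.
Variables (G H : zmodType) (f : G -> H).
Hypothesis fD : {morph f : x y / x + y}.

Lemma addmorph0 : f 0 = 0.
Proof. by apply: (addrI (f 0)); rewrite -fD !addr0. Qed.

Lemma addmorphN x : f (- x) = - f x.
Proof. by apply/eqP; rewrite -addr_eq0 -fD addNr addmorph0. Qed.

Lemma addmorphB x y : f (x - y) = f x - f y.
Proof. by rewrite fD addmorphN. Qed.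

Lemma addmorphMn x n : f (x *+ n) = f x *+ n.
Proof. by elim: n => [|n IHn]; rewrite ?mulr0n ?addmorph0 // !mulrS fD IHn. Qed.

End AdditiveMorphism.

Section OrderEmbedding.
Variables (G H : zmodType) (leG : rel G) (leH : rel H) (f : G -> H).
Hypotheses (fD : {morph f : x y / x + y}) (f_le : forall x y, leH (f x) (f y) = leG x y).
Hypothesis hG : is_oag leG.

Lemma oag_embedding_inj : injective f.
Proof.
by move=> x y fxy; apply: (oag_anti hG); rewrite -f_le fxy f_le (oag_refl hG).
Qed.

Lemma oag_embedding_lt x y : ltof leH (f x) (f y) = ltof leG x y.
Proof. by rewrite /ltof f_le (inj_eq oag_embedding_inj). Qed.

Lemma ole_omap a b : ole leH (omap f a) (omap f b) = ole leG a b.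
Proof. by case: a b => [x|] [y|] //=; rewrite f_le. Qed.

Lemma is_valuation_comp (R : nzRingType) (w : R -> option G) :
  is_valuation leG w -> is_valuation leH (fun a => omap f (w a)).
Proof.
case=> w_eqNone w1 wM wD; split.
- move=> a; split=> [|/w_eqNone -> //].
  by case wa: (w a) => //= _; apply/w_eqNone.
- by rewrite w1 /= (addmorph0 fD).
- by move=> a b; rewrite wM; case: (w a) (w b) => [x|] [y|] //=; rewrite fD.
- by move=> a b; have := wD a b; rewrite /omin ole_omap; case: ifP => _; rewrite ole_omap.
Qed.

End OrderEmbedding.

Definition below_hull (G G' : zmodType) (le' : rel G') (iota : G -> G') (x : G') :=
  forall (h : G) (n : nat), (0 < n)%N -> ltof le' (x *+ n) (iota h).

Section DivisibleHull.
Variables (G H : zmodType) (leG : rel G) (leH : rel H) (j : G -> H).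
Hypothesis hj : divisible_hull leG leH j.

Lemma hull_oag : is_oag leH. Proof. by case: hj. Qed.
Lemma hull_morphD : {morph j : x y / x + y}. Proof. by case: hj. Qed.
Lemma hull_le x y : leH (j x) (j y) = leG x y. Proof. by case: hj => _ _ ->. Qed.
Lemma hull_div (h : H) n : (0 < n)%N -> exists h', h' *+ n = h.
Proof. by case: hj => _ _ _ /(_ h n). Qed.
Lemma hull_den (h : H) : exists2 n, (0 < n)%N & exists g, j g = h *+ n.
Proof. by case: hj => _ _ _ _ /(_ h) [n [n_gt0 gh]]; exists n. Qed.

End DivisibleHull.

Section HullEmbedding.
Variables (G G' H H' : zmodType) (leG : rel G) (leG' : rel G').
Variables (leH : rel H) (leH' : rel H') (j : G -> H) (j' : G' -> H').
Variables (iota : G -> G') (iotaH : H -> H').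
Hypotheses (hj : divisible_hull leG leH j) (hj' : divisible_hull leG' leH' j').
Hypothesis hG' : is_oag leG'.
Hypothesis iota_le : forall x y, leG' (iota x) (iota y) = leG x y.
Hypotheses (iotaHD : {morph iotaH : x y / x + y}) (iotaH_j : forall g, iotaH (j g) = j' (iota g)).

Lemma hull_map_le a b : leH' (iotaH a) (iotaH b) = leH a b.
Proof.
have [m m_gt0 [x jx]] := hull_den hj a; have [n n_gt0 [y jy]] := hull_den hj b.
have mn_gt0 : (0 < m * n)%N by rewrite muln_gt0 m_gt0.
have jMn := addmorphMn (hull_morphD hj).
have ea : a *+ (m * n) = j (x *+ n) by rewrite mulrnA -jx jMn.
have eb : b *+ (m * n) = j (y *+ m) by rewrite mulnC mulrnA -jy jMn.
have ea' : iotaH a *+ (m * n) = j' (iota (x *+ n)) by rewrite -iotaH_j -ea (addmorphMn iotaHD).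
have eb' : iotaH b *+ (m * n) = j' (iota (y *+ m)) by rewrite -iotaH_j -eb (addmorphMn iotaHD).
rewrite -(oag_leMn2r (hull_oag hj') _ _ mn_gt0) -(oag_leMn2r (hull_oag hj) _ _ mn_gt0).
by rewrite ea eb ea' eb' (hull_le hj') iota_le (hull_le hj).
Qed.

Lemma below_hullP x :
  (forall gam, ltof leH' (j' x) (iotaH gam)) <-> below_hull leG' iota x.
Proof.
have j'_lt := oag_embedding_lt (hull_le hj') hG'.
split=> [lt_x h n n_gt0 | below gam].
  have [gam gamn] := hull_div hj (j h) n_gt0.
  rewrite -j'_lt (addmorphMn (hull_morphD hj')) -iotaH_j -gamn (addmorphMn iotaHD).
  by rewrite (oag_ltMn2r (hull_oag hj')).
have [n n_gt0 [h jh]] := hull_den hj gam.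
rewrite -(oag_ltMn2r (hull_oag hj') _ _ n_gt0).
have -> : iotaH gam *+ n = j' (iota h) by rewrite -iotaH_j jh (addmorphMn iotaHD).
have -> : j' x *+ n = j' (x *+ n) by rewrite (addmorphMn (hull_morphD hj')).
by rewrite j'_lt below.
Qed.

End HullEmbedding.

Section GaussValuation.
Variables (G : zmodType) (le : rel G) (R : nzRingType) (v : R -> option G).
Hypotheses (hG : is_oag le) (hv : is_valuation le v).
Variable g : G.
Local Notation ole := (ole le).
Local Notation olt := (ltof ole).
Local Notation shift t := (omap (fun x => x + t)).
Implicit Types f h : {poly R}.

Definition gauss_term (f : {poly R}) i := shift (g *+ i) (v f`_i).

Definition gauss_val (f : {poly R}) :=
  foldr (fun i m => omin le (gauss_term f i) m) None (iota 0 (size f)).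

Lemma gauss_term_eq0 f i : (size f <= i)%N -> gauss_term f i = None.
Proof. by move=> le_f_i; rewrite /gauss_term nth_default // (valuation0 hv). Qed.

Lemma gauss_val_le_term f i : ole (gauss_val f) (gauss_term f i).
Proof.
have [lt_i_f|le_f_i] := ltnP i (size f); last first.
  by rewrite gauss_term_eq0 //; case: (gauss_val f).
rewrite /gauss_val; have : i \in iota 0 (size f) by rewrite mem_iota.
elim: (iota 0 (size f)) => // k s IHs; rewrite in_cons => /predU1P [->|/IHs le_s_i] /=.
  exact: ole_minl.
exact: (ole_trans hG (ole_minr hG _ _) le_s_i).
Qed.

Lemma gauss_val_ge f c : (forall i, ole c (gauss_term f i)) -> ole c (gauss_val f).
Proof.
move=> le_c; rewrite /gauss_val; elim: (iota _ _) => [|k s IHs] /=.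
  by case: c {le_c}.
exact: ole_min.
Qed.

Lemma gauss_val_attained f : exists i, gauss_val f = gauss_term f i.
Proof.
rewrite /gauss_val; elim: (iota 0 (size f)) => [|k s [i IHs]] /=.
  by exists (size f); rewrite gauss_term_eq0.
by rewrite /omin; case: ifP => _; [exists k | exists i].
Qed.

Lemma gauss_valE f c :
  (forall i, ole c (gauss_term f i)) -> (exists i, gauss_term f i = c) -> gauss_val f = c.
Proof.
move=> le_c [i fi]; apply: (ole_anti hG) (gauss_val_ge le_c).
by rewrite -fi gauss_val_le_term.
Qed.

Lemma gauss_val_first f A : gauss_val f = Some A ->
  exists i, gauss_term f i = Some A /\ forall j, (j < i)%N -> gauss_term f j != Some A.
Proof.
move=> Wf; have attained : exists i, gauss_term f i == Some A.
  by have [i Wfi] := gauss_val_attained f; exists i; rewrite -Wfi Wf.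
have [i /eqP fi min_i] := ex_minnP attained; exists i; split=> // j lt_ji.
by apply/negP => /min_i; rewrite leqNgt lt_ji.
Qed.

Lemma gauss_val0 : gauss_val 0 = None.
Proof. by rewrite /gauss_val size_poly0. Qed.

Lemma gauss_valC c : gauss_val c%:P = v c.
Proof.
apply: gauss_valE => [[|i]|]; rewrite /gauss_term.
- by rewrite coefC /=; case: (v c) => //= x; rewrite mulr0n addr0 (oag_refl hG).
- by rewrite coefC /= (valuation0 hv); case: (v c).
- by exists 0%N; rewrite /gauss_term coefC /=; case: (v c) => //= x; rewrite mulr0n addr0.
Qed.

Lemma gauss_valX : gauss_val 'X = Some g.
Proof.
apply: gauss_valE => [[|[|i]]|]; rewrite /gauss_term ?coefX /= ?mulr1n.
- by rewrite (valuation0 hv).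
- by rewrite (valuation1 hv) /= add0r (oag_refl hG).
- by rewrite (valuation0 hv).
by exists 1%N; rewrite /gauss_term coefX /= !mulr1n (valuation1 hv) /= add0r.
Qed.

Lemma gauss_val_eq0 f : gauss_val f = None <-> f = 0.
Proof.
split=> [Wf|->]; last exact: gauss_val0.
apply/eqP; apply: contraT => f_neq0.
have [x vlc] : exists x, v (lead_coef f) = Some x.
  by apply: (valuation_neq0 hv); rewrite lead_coef_eq0.
by have := gauss_val_le_term f (size f).-1; rewrite Wf /gauss_term -lead_coefE vlc.
Qed.

Lemma gauss_valD f h : ole (omin le (gauss_val f) (gauss_val h)) (gauss_val (f + h)).
Proof.
apply: gauss_val_ge => i; rewrite /gauss_term coefD.
apply: (ole_trans hG (b := shift (g *+ i) (omin le (v f`_i) (v h`_i)))); last first.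
  by rewrite (ole_addr hG) (valuationD hv).
have [->|->] := omin_cases le (v f`_i) (v h`_i).
  exact: (ole_trans hG (ole_minl hG _ _) (gauss_val_le_term f i)).
exact: (ole_trans hG (ole_minr hG _ _) (gauss_val_le_term h i)).
Qed.

Lemma gauss_term_mulE f h j k : (j <= k)%N ->
  shift (g *+ k) (v (f`_j * h`_(k - j))) = oadd (gauss_term f j) (gauss_term h (k - j)).
Proof.
move=> le_jk; rewrite (valuationM hv) /gauss_term.
have -> : g *+ k = g *+ j + g *+ (k - j) by rewrite -mulrnDr subnKC.
by case: (v f`_j) (v h`_(k - j)) => [x|] [y|] //=; rewrite addrACA.
Qed.

Lemma gauss_val_mul_le f h k :
  ole (oadd (gauss_val f) (gauss_val h)) (gauss_term (f * h) k).
Proof.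
rewrite /gauss_term coefM (ole_shift hG); apply: (valuation_sum_ge hG hv) => j _.
rewrite -(ole_shift hG) gauss_term_mulE; last by rewrite -ltnS.
exact: (ole_oadd hG (gauss_val_le_term f j) (gauss_val_le_term h _)).
Qed.

Lemma gauss_term_mul_lowest f h i0 j0 A B :
  gauss_val f = Some A -> gauss_term f i0 = Some A ->
  (forall j, (j < i0)%N -> gauss_term f j != Some A) ->
  gauss_val h = Some B -> gauss_term h j0 = Some B ->
  (forall j, (j < j0)%N -> gauss_term h j != Some B) ->
  gauss_term (f * h) (i0 + j0) = Some (A + B).
Proof.
move=> Wf fi0 f_first Wh hj0 h_first.
have Wf_lt j : (j < i0)%N -> olt (Some A) (gauss_term f j).
  by move=> lt_ji0; rewrite /ltof -Wf gauss_val_le_term Wf eq_sym f_first.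
have Wh_lt j : (j < j0)%N -> olt (Some B) (gauss_term h j).
  by move=> lt_jj0; rewrite /ltof -Wh gauss_val_le_term Wh eq_sym h_first.
have Wf_le j : ole (Some A) (gauss_term f j) by rewrite -Wf gauss_val_le_term.
have Wh_le j : ole (Some B) (gauss_term h j) by rewrite -Wh gauss_val_le_term.
(* In the (i0 + j0)-th coefficient every summand other than f_i0 h_j0 has a factor
   f_j with j < i0 or h_j with j < j0, hence a strictly larger Gauss term. *)
have lt_i0 : (i0 < (i0 + j0).+1)%N by rewrite ltnS leq_addr.
rewrite /gauss_term coefM (bigD1 (Ordinal lt_i0)) //=.
rewrite (valuationD_dominant hG hv (x := A + B - g *+ (i0 + j0))) /= ?subrK //.
  have := gauss_term_mulE f h (leq_addr j0 i0); rewrite addKn fi0 hj0.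
  by case: (v _) => //= x [<-]; rewrite addrK.
apply: (valuation_sum_gt hG hv) => j ne_j_i0.
have le_j : (j <= i0 + j0)%N by rewrite -ltnS.
rewrite -(olt_addr hG (g *+ (i0 + j0))) /= subrK gauss_term_mulE //.
case: (ltngtP j i0) => [lt_ji0|lt_i0j|eq_ji0].
- exact: (olt_oadd hG (Wf_lt _ lt_ji0) (Wh_le _)).
- rewrite addrC oaddC; apply: (olt_oadd hG (Wh_lt _ _) (Wf_le _)).
  by rewrite ltn_subLR // ltn_add2r.
- by case/eqP: ne_j_i0; apply: val_inj.
Qed.

Lemma gauss_valM f h : gauss_val (f * h) = oadd (gauss_val f) (gauss_val h).
Proof.
have [->|f_neq0] := eqVneq f 0; first by rewrite mul0r gauss_val0.
have [->|h_neq0] := eqVneq h 0; first by rewrite mulr0 gauss_val0; case: (gauss_val f).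
case Wf: (gauss_val f) => [A|]; last by move/gauss_val_eq0: Wf f_neq0 => ->; rewrite eqxx.
case Wh: (gauss_val h) => [B|]; last by move/gauss_val_eq0: Wh h_neq0 => ->; rewrite eqxx.
have [i0 [fi0 f_first]] := gauss_val_first Wf.
have [j0 [hj0 h_first]] := gauss_val_first Wh.
apply: gauss_valE => [k|]; first by rewrite -Wf -Wh gauss_val_mul_le.
by exists (i0 + j0)%N; apply: gauss_term_mul_lowest.
Qed.

Lemma is_valuation_gauss : is_valuation le gauss_val.
Proof.
split; [exact: gauss_val_eq0 | | exact: gauss_valM | exact: gauss_valD].
by rewrite -polyC1 gauss_valC (valuation1 hv).
Qed.

End GaussValuation.

Lemma poly_sum_monomials (R : nzRingType) (f : {poly R}) :
  f = \sum_(i < size f) (f`_i)%:P * 'X^i.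
Proof.
rewrite -[f in LHS]comp_polyXr comp_polyE.
by apply: eq_bigr => i _; rewrite mul_polyC.
Qed.

Section LeadingMonomial.
Variables (R : nzRingType) (G G' : zmodType) (leG : rel G) (leG' : rel G').
Variables (v : R -> option G) (iota : G -> G') (eta : {poly R} -> option G') (e : G').
Hypotheses (hG' : is_oag leG') (hv : is_valuation leG v) (heta : is_valuation leG' eta).
Hypotheses (iotaD : {morph iota : x y / x + y}) (eta_C : forall c, eta c%:P = omap iota (v c)).
Hypotheses (etaX : eta 'X = Some e) (below : below_hull leG' iota e).

Lemma eta_monomial c i : eta (c%:P * 'X^i) = oadd (omap iota (v c)) (Some (e *+ i)).
Proof. by rewrite (valuationM heta) eta_C (valuationXn heta _ etaX). Qed.

Lemma eta_monomial_gt f a i : v (lead_coef f) = Some a -> (i < (size f).-1)%N ->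
  ltof (ole leG') (Some (iota a + e *+ (size f).-1)) (eta ((f`_i)%:P * 'X^i)).
Proof.
move=> vlc lt_id; rewrite eta_monomial; case: (v f`_i) => [b|] //=; rewrite oltSS.
have lt_da : ltof leG' (e *+ ((size f).-1 - i)) (iota b - iota a).
  by rewrite -(addmorphB iotaD); apply: below; rewrite subn_gt0.
have -> : iota a + e *+ (size f).-1 = e *+ ((size f).-1 - i) + (iota a + e *+ i).
  by rewrite addrCA -mulrnDr subnK // ltnW.
have -> : iota b + e *+ i = (iota b - iota a) + (iota a + e *+ i) by rewrite addrA subrK.
by rewrite (oag_ltD2r hG').
Qed.

Lemma eta_lead f :
  f != 0 -> eta f = omap (fun a => iota a + e *+ (size f).-1) (v (lead_coef f)).
Proof.
move=> f_neq0; have [a vlc] : exists a, v (lead_coef f) = Some a.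
  by apply: (valuation_neq0 hv); rewrite lead_coef_eq0.
rewrite vlc /=; set d := (size f).-1.
have size_f : size f = d.+1 by rewrite prednK // size_poly_gt0.
rewrite [in LHS](poly_sum_monomials f) size_f big_ord_recr /= addrC.
apply: (valuationD_dominant hG' heta); first by rewrite eta_monomial -lead_coefE vlc.
by apply: (valuation_sum_gt hG' heta) => i _; apply: eta_monomial_gt vlc (ltn_ord i).
Qed.

Lemma eta_le_monomial f i : ole leG' (eta f) (eta ((f`_i)%:P * 'X^i)).
Proof.
have [->|f_neq0] := eqVneq f 0; first by rewrite coef0 mul0r (valuation0 heta).
have [a vlc] : exists a, v (lead_coef f) = Some a.
  by apply: (valuation_neq0 hv); rewrite lead_coef_eq0.
rewrite (eta_lead f_neq0) vlc.
case: (ltngtP i (size f).-1) => [lt_id|lt_di|->].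
- exact: olt_ole (eta_monomial_gt vlc lt_id).
- rewrite prednK ?size_poly_gt0 // in lt_di.
  by rewrite nth_default // mul0r (valuation0 heta).
- by rewrite -lead_coefE eta_monomial vlc /= (oag_refl hG').
Qed.

End LeadingMonomial.

Section LexEmbedding.
Variables (G G' : zmodType) (leG : rel G) (leG' : rel G') (iota : G -> G') (e : G').
Hypotheses (hG : is_oag leG) (hG' : is_oag leG') (iotaD : {morph iota : x y / x + y}).
Hypothesis iota_le : forall x y, leG' (iota x) (iota y) = leG x y.

(* Sends mu_minf f = (- deg f, v (lc f)) to iota (v (lc f)) + deg f * e. *)
Definition lex_embedding (x : int * G) : G' := iota x.2 - e *~ x.1.

Lemma lex_embeddingD : {morph lex_embedding : x y / x + y}.
Proof. by move=> x y; rewrite /lex_embedding /= iotaD mulrzDr opprD addrACA. Qed.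

Lemma lex_embedding_le : below_hull leG' iota e ->
  forall x y, leG' (lex_embedding x) (lex_embedding y) = lexle leG x y.
Proof.
move=> below x y.
have -> : lexle leG x y = lexle leG 0 (y - x).
  by rewrite /lexle /= subr_gt0 [0 == _]eq_sym subr_eq0 eq_sym (oag_subr_ge0 hG).
rewrite -(oag_subr_ge0 hG') -(addmorphB lex_embeddingD).
case: (y - x) => [k z]; rewrite /lex_embedding /lexle /=.
have iota0 : iota 0 = 0 := addmorph0 iotaD.
case: k => [[|n]|n] /=.
- by rewrite mulr0z subr0 -iota0 iota_le.
- by apply: oag_ltW; rewrite (oag_subr_gt0 hG') -pmulrn below.
- apply/negbTE; rewrite -(oag_ltNge hG') NegzE mulrNz opprK -pmulrn.
  have := below (- z) n.+1 isT.
  by rewrite (addmorphN iotaD) -(oag_ltD2l hG' (iota z)) subrr.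
Qed.

End LexEmbedding.

Lemma equiv_val_of_morph (R : nzRingType) (G1 G2 : zmodType) (le1 : rel G1) (le2 : rel G2)
    (w1 : R -> option G1) (w2 : R -> option G2) (J : G2 -> G1) :
  {morph J : x y / x + y} -> (forall x y, le1 (J x) (J y) = le2 x y) ->
  (forall a, a != 0 -> w1 a = omap J (w2 a)) -> equiv_val le1 w1 le2 w2.
Proof.
move=> JD J_le w1E; have JB := addmorphB JD.
exists J; split=> [x y _ _ | x y _ _ | _ [a [b [x [y [a0 b0 wa wb ->]]]]]
                  | _ [a [b [x [y [a0 b0 wa wb ->]]]]] | //].
- exact: JD.
- exact: J_le.
- by exists a, b, (J x), (J y); rewrite !w1E // wa wb JB.
- move: wa wb; rewrite !w1E //.
  case wa: (w2 a) => [x'|] // [<-]; case wb: (w2 b) => [y'|] // [<-].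
  by exists (x' - y'); [exists a, b, x', y' | rewrite JB].
Qed.

Lemma value_group_of_val (R : nzRingType) (G : zmodType) (w : R -> option G) a x :
  w 1 = Some 0 -> a != 0 -> w a = Some x -> value_group w x.
Proof. by move=> w1 a_neq0 wa; exists a, 1, x, 0; rewrite subr0 oner_neq0. Qed.

Section MinimalValuation.
Variables (K : fieldType) (Gam : zmodType) (leG : rel Gam) (v : K -> option Gam).
Hypotheses (hG : is_oag leG) (hv : is_valuation leG v).
Hypothesis hvsurj : forall g : Gam, exists2 a : K, a != 0 & v a = Some g.
Hypothesis hnontriv : exists g : Gam, g != 0.
Variables (GamQ : zmodType) (leQ : rel GamQ) (jQ : Gam -> GamQ).
Hypothesis hQ : divisible_hull leG leQ jQ.
Variables (Gam' : zmodType) (leG' : rel Gam') (iota : Gam -> Gam').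
Hypotheses (hG' : is_oag leG') (iotaD : {morph iota : x y / x + y}).
Hypothesis iota_le : forall x y, leG' (iota x) (iota y) = leG x y.
Variables (Gam'Q : zmodType) (leQ' : rel Gam'Q) (jQ' : Gam' -> Gam'Q).
Hypothesis hQ' : divisible_hull leG' leQ' jQ'.
Variable iotaQ : GamQ -> Gam'Q.
Hypothesis iotaQD : {morph iotaQ : x y / x + y}.
Hypothesis iotaQ_jQ : forall g, iotaQ (jQ g) = jQ' (iota g).
Variables (eta : {poly K} -> option Gam') (e : Gam').
Hypotheses (heta : is_valuation leG' eta) (eta_C : forall c, eta c%:P = omap iota (v c)).
Hypothesis etaX : eta 'X = Some e.

Definition extends_v (mu : {poly K} -> option GamQ) :=
  is_valuation leQ mu /\ forall c, mu c%:P = omap jQ (v c).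

Definition below_every_extension :=
  forall f mu, extends_v mu -> ole leQ' (omap jQ' (eta f)) (omap iotaQ (mu f)).

Lemma below_every_extension_of_below_hull :
  below_hull leG' iota e -> below_every_extension.
Proof.
move=> below f mu [hmu mu_C].
have [q muX] : exists q, mu 'X = Some q by apply: (valuation_neq0 hmu); rewrite polyX_eq0.
have le_e_q : leQ' (jQ' e) (iotaQ q).
  exact: oag_ltW (proj2 (below_hullP hQ hQ' hG' iotaQD iotaQ_jQ e) below q).
have hmuQ' : is_valuation leQ' (fun f => omap iotaQ (mu f)).
  exact: (is_valuation_comp iotaQD (hull_map_le hQ hQ' iota_le iotaQD iotaQ_jQ) hmu).
rewrite [f in mu f]poly_sum_monomials; apply: (valuation_sum_ge (hull_oag hQ') hmuQ') => i _.
apply: (ole_trans (hull_oag hQ') (b := omap jQ' (eta ((f`_i)%:P * 'X^i)))).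
  by rewrite (ole_omap (hull_le hQ')) (eta_le_monomial hG' hv heta iotaD eta_C etaX below).
rewrite (valuationM hmu) mu_C (valuationXn hmu _ muX) (eta_monomial heta eta_C etaX).
case: (v f`_i) => [b|] //=; rewrite (hull_morphD hQ') iotaQD iotaQ_jQ.
rewrite (oag_leD2l (hull_oag hQ')) (addmorphMn iotaQD) (addmorphMn (hull_morphD hQ')).
exact: (oag_leMn (hull_oag hQ') i le_e_q).
Qed.

Lemma below_hull_of_below_every_extension :
  below_every_extension -> below_hull leG' iota e.
Proof.
move=> below_ext h n n_gt0.
have [g lt_gh] := oag_exists_ltMn hG hnontriv h n_gt0.
pose mu f := omap jQ (gauss_val leG v g f).
have mu_ext : extends_v mu.
  split=> [|c]; last by rewrite /mu (gauss_valC hG hv).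
  exact: (is_valuation_comp (hull_morphD hQ) (hull_le hQ) (is_valuation_gauss hG hv g)).
have := below_ext 'X mu mu_ext.
rewrite etaX /mu (gauss_valX hG hv) /= iotaQ_jQ (hull_le hQ') => le_e_g.
apply: (oag_le_lt_trans hG' (oag_leMn hG' n le_e_g)).
have -> : iota g *+ n = iota (g *+ n) by rewrite (addmorphMn iotaD).
by rewrite (oag_embedding_lt iota_le hG).
Qed.

Lemma mu_minf1 : mu_minf v 1 = Some 0.
Proof. by rewrite /mu_minf lead_coef1 (valuation1 hv) size_poly1 /= oppr0. Qed.

Lemma equiv_minf_of_below_hull :
  below_hull leG' iota e -> equiv_val leG' eta (lexle leG) (mu_minf v).
Proof.
move=> below; apply: (equiv_val_of_morph (J := lex_embedding iota e)).
- exact: lex_embeddingD.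
- exact: (lex_embedding_le hG hG' iotaD iota_le below).
move=> f f_neq0; rewrite (eta_lead hG' hv heta iotaD eta_C etaX below f_neq0) /mu_minf.
by case: (v _) => //= a; rewrite /lex_embedding /= mulrNz opprK -pmulrn.
Qed.

Lemma below_hull_of_equiv_minf :
  equiv_val leG' eta (lexle leG) (mu_minf v) -> below_hull leG' iota e.
Proof.
case=> J [_ J_le _ _ etaE] h n n_gt0.
have [c c_neq0 vc] := hvsurj h.
have Xn_neq0 : 'X^n != 0 :> {poly K} by rewrite -size_poly_gt0 size_polyXn.
have cP_neq0 : c%:P != 0 by rewrite polyC_eq0.
have muXn : mu_minf v 'X^n = Some (- n%:Z, 0).
  by rewrite /mu_minf lead_coefXn (valuation1 hv) size_polyXn.
have muc : mu_minf v c%:P = Some (0, h).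
  by rewrite /mu_minf lead_coefC vc size_polyC c_neq0 /= oppr0.
have Je : J (- n%:Z, 0) = e *+ n.
  by have := etaE _ Xn_neq0; rewrite muXn (valuationXn heta _ etaX) => -[].
have Jh : J (0, h) = iota h by have := etaE _ cP_neq0; rewrite muc eta_C vc => -[].
have vgXn := value_group_of_val mu_minf1 Xn_neq0 muXn.
have vgc := value_group_of_val mu_minf1 cP_neq0 muc.
rewrite -Je -Jh /ltof (J_le _ _ vgXn vgc) /lexle /= oppr_lt0 ltz_nat n_gt0 /=.
apply/eqP => eqJ; have := J_le _ _ vgc vgXn; rewrite eqJ (oag_refl hG') /lexle /=.
by rewrite oppr_gt0 ltz_nat ltn0 eq_sym oppr_eq0 eqz_nat gtn_eqF.
Qed.

Lemma below_every_extensionP : below_every_extension <-> below_hull leG' iota e.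
Proof.
split; first exact: below_hull_of_below_every_extension.
exact: below_every_extension_of_below_hull.
Qed.

Lemma equiv_minfP :
  equiv_val leG' eta (lexle leG) (mu_minf v) <-> below_hull leG' iota e.
Proof.
split; first exact: below_hull_of_equiv_minf.
exact: equiv_minf_of_below_hull.
Qed.

End MinimalValuation.

Theorem mainTheorem1
  (* the valued field (K, v) with value group Γ = v(K^* ), non-trivial *)
  (K : fieldType) (Gam : zmodType) (leG : rel Gam) (v : K -> option Gam)
  (hG : is_oag leG) (hv : is_valuation leG v)
  (hvsurj : forall g : Gam, exists2 a : K, a != 0 & v a = Some g)
  (hnontriv : exists g : Gam, g != 0)
  (* Γ_Q = Γ ⊗ Q with its induced order, Γ ↪ Γ_Q *)
  (GamQ : zmodType) (leQ : rel GamQ) (jQ : Gam -> GamQ)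
  (hQ : divisible_hull leG leQ jQ)
  (* Γ' ordered abelian group, ι : Γ ↪ Γ' order-preserving embedding *)
  (Gam' : zmodType) (leG' : rel Gam') (hG' : is_oag leG')
  (iota : Gam -> Gam')
  (hiota_add : forall x y, iota (x + y) = iota x + iota y)
  (hiota_le : forall x y, leG' (iota x) (iota y) = leG x y)
  (* Γ'_Q = Γ' ⊗ Q, Γ' ↪ Γ'_Q *)
  (Gam'Q : zmodType) (leQ' : rel Gam'Q) (jQ' : Gam' -> Gam'Q)
  (hQ' : divisible_hull leG' leQ' jQ')
  (* ι ⊗ Q : Γ_Q -> Γ'_Q *)
  (iotaQ : GamQ -> Gam'Q)
  (hiotaQ_add : forall x y, iotaQ (x + y) = iotaQ x + iotaQ y)
  (hiotaQ_comp : forall g, iotaQ (jQ g) = jQ' (iota g))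
  (* η : K[x] -> Γ' ∪ {∞} a valuation extending v via ι *)
  (eta : {poly K} -> option Gam')
  (heta : is_valuation leG' eta)
  (heta_ext : forall c : K, eta c%:P = omap iota (v c)) :
  let inV (mu : {poly K} -> option GamQ) : Prop :=
    is_valuation leQ mu /\ (forall c : K, mu c%:P = omap jQ (v c)) in
  [/\ (* (1) <-> (2) *)
      (forall (f : {poly K}) (mu : {poly K} -> option GamQ), inV mu ->
         ole leQ' (omap jQ' (eta f)) (omap iotaQ (mu f)))
      <-> (forall gam : GamQ,
         ltof (ole leQ') (omap jQ' (eta 'X)) (Some (iotaQ gam))),
      (* (2) <-> (3) *)
      (forall gam : GamQ,
         ltof (ole leQ') (omap jQ' (eta 'X)) (Some (iotaQ gam)))
      <-> equiv_val leG' eta (lexle leG) (mu_minf v) &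
      (* (1) <-> (3) *)
      (forall (f : {poly K}) (mu : {poly K} -> option GamQ), inV mu ->
         ole leQ' (omap jQ' (eta f)) (omap iotaQ (mu f)))
      <-> equiv_val leG' eta (lexle leG) (mu_minf v)].
Proof.
move=> inV.
have [e etaX] : exists e, eta 'X = Some e by apply: (valuation_neq0 heta); rewrite polyX_eq0.
have cond1 := below_every_extensionP hG hv hnontriv hQ hG' hiota_add hiota_le hQ'
  hiotaQ_add hiotaQ_comp heta heta_ext etaX.
have cond2 := below_hullP hQ hQ' hG' hiotaQ_add hiotaQ_comp e.
have cond3 := equiv_minfP hG hv hvsurj hG' hiota_add hiota_le heta heta_ext etaX.
rewrite etaX; split.
- exact: iff_trans cond1 (iff_sym cond2).
- exact: iff_trans cond2 (iff_sym cond3).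
- exact: iff_trans cond1 (iff_sym cond3).
Qed.
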